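(* Let $T>0$, $F:\mathbb{R}\times\mathbb{R}^n\rightrightarrows\mathbb{R}^n$ a set-valued mapping, $G_t(x):=F(t,x)$ for $t\in[0,T]$, $x\in\mathbb{R}^n$, and $x:[0,T]\to\mathbb{R}^n$ a mapping. Assume that for each $\varepsilon>0$ there is $\beta>0$ such that for each $t\in[0,T]$, each $(u,y)\in(B[x(t),\beta]\times B[0,\beta])\cap\operatorname{gph}G_t$ and each $(y^*,x^* )\in\operatorname{gph}D^*G_t(u,y)$, $$|\langle x^*,u-x(t)\rangle-\langle y^*,y\rangle|\le\varepsilon\|(x^*,y^* )\|\,\|(u,y)-(x(t),0)\|.$$ Then for each $\varepsilon>0$ there is $\beta>0$ such that for each $t\in[0,T]$, each $(u,y)\in(B[x(t),\beta]\times B[0,\beta])\cap\operatorname{gph}G_t$ and each $(A,B)\in\mathcal{A}_{\mathrm{reg}}G_t(u,y)$, $$\|u-A^{-1}By-x(t)\|\le\varepsilon\,\|A^{-1}\|\,\|(A\mid B)\|_F\,\|(u,y)-(x(t),0)\|.$$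
   Context: Euclidean norm on $\mathbb{R}^n$, max-norm on products, $\|A^{-1}\|$ the induced operator norm, $\|\cdot\|_F$ the Frobenius norm, $(A\mid B)$ horizontal concatenation; $B[z,r]$ closed ball. Limiting coderivative: $\operatorname{gph}D^*G(x,y)=\{(y^*,x^* ):(x^*,-y^* )\in N_{\operatorname{gph}G}(x,y)\}$, $N$ the limiting normal cone. For $G:\mathbb{R}^n\rightrightarrows\mathbb{R}^n$ and $(x,y)\in\operatorname{gph}G$, $\mathcal{A}_{\mathrm{reg}}G(x,y)$ is the set of pairs $(A,B)$ of $n\times n$ matrices such that $A$ is invertible and $((B)_i^T,(A)_i^T)\in\operatorname{gph}D^*G(x,y)$ for each $i=1,\dots,n$, where $(M)_i$ denotes the $i$-th row of $M$. *)

From HB Require Import structures.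
From mathcomp Require Import all_boot all_order all_algebra.
From mathcomp Require Import boolp classical_sets reals.
Set Implicit Arguments. Unset Strict Implicit. Unset Printing Implicit Defensive.
Import Order.TTheory GRing.Theory Num.Theory.
Local Open Scope ring_scope.
Local Open Scope classical_set_scope.

Section Defs.
Variables (R : realType) (n : nat).
Notation vec := 'cV[R]_n.

Definition vdot (a b : vec) : R := \sum_(i < n) a i 0 * b i 0.
Definition enorm (a : vec) : R := Num.sqrt (vdot a a).

Definition pnorm (a b : vec) : R := Num.max (enorm a) (enorm b).

Definition opnorm (M : 'M[R]_n) : R :=
  sup [set enorm (M *m v) | v in [set v : vec | enorm v <= 1]].

Definition frob m (M : 'M[R]_(n, m)) : R :=
  Num.sqrt (\sum_(i < n) \sum_(j < m) M i j ^+ 2).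

Definition pdist (w z : vec * vec) : R := pnorm (w.1 - z.1) (w.2 - z.2).
Definition pdot (v w : vec * vec) : R := vdot v.1 w.1 + vdot v.2 w.2.

Definition frechet_normal (Om : set (vec * vec)) (z v : vec * vec) : Prop :=
  Om z /\
  forall eps : R, 0 < eps -> exists delta : R, 0 < delta /\
    forall w, Om w -> pdist w z <= delta ->
      pdot v (w.1 - z.1, w.2 - z.2) <= eps * pdist w z.

Definition pcvg (s : nat -> vec * vec) (l : vec * vec) : Prop :=
  forall eps : R, 0 < eps -> exists N : nat, forall k : nat, (N <= k)%N ->
    pdist (s k) l <= eps.

Definition limiting_normal (Om : set (vec * vec)) (z v : vec * vec) : Prop :=
  Om z /\
  exists (zs vs : nat -> vec * vec),
    (forall k, frechet_normal Om (zs k) (vs k)) /\ pcvg zs z /\ pcvg vs v.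

Definition gph (G : vec -> set vec) : set (vec * vec) := [set p | G p.1 p.2].

(* graph of the limiting coderivative: (ys, xs) with (xs, -ys) in N_gph G(x,y) *)
Definition coderiv_gph (G : vec -> set vec) (x y : vec) : set (vec * vec) :=
  [set p | limiting_normal (gph G) (x, y) (p.2, - p.1)].

Definition Areg (G : vec -> set vec) (x y : vec) : set ('M[R]_n * 'M[R]_n) :=
  [set AB | AB.1 \in unitmx /\
     forall i : 'I_n, coderiv_gph G x y ((row i AB.2)^T, (row i AB.1)^T)].
End Defs.

(* Write d := ||(u, y) - (x(t), 0)|| and v := A (u - x(t)) - B y.  Since the i-th rows of (A, B)
   form a coderivative pair at (u, y), the hypothesis bounds the i-th coordinate of v by
   eps ||(A_i, B_i)|| d; summing squares gives ||v|| <= eps ||(A | B)||_F d.  Finally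
   u - A^-1 B y - x(t) = A^-1 v, whose norm is at most ||A^-1|| ||v||. *)
From HB Require Import structures.
From mathcomp Require Import all_boot all_order all_algebra.
From mathcomp Require Import boolp classical_sets reals.
From mathcomp Require Import ring.
Set Implicit Arguments. Unset Strict Implicit. Unset Printing Implicit Defensive.
Import Order.TTheory GRing.Theory Num.Theory.
Local Open Scope ring_scope.

Section Norms.
Variables (R : realType) (n : nat).
Notation vec := 'cV[R]_n.

Lemma vdot_ge0 (a : vec) : 0 <= vdot a a.
Proof. by apply: sumr_ge0 => i _; rewrite -expr2 sqr_ge0. Qed.

Lemma enorm_ge0 (a : vec) : 0 <= enorm a.
Proof. exact: sqrtr_ge0. Qed.

Lemma sqr_enorm (a : vec) : enorm a ^+ 2 = vdot a a.
Proof. by rewrite sqr_sqrtr // vdot_ge0. Qed.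

Lemma enorm0 : enorm (0 : vec) = 0.
Proof. by rewrite /enorm /vdot big1 ?sqrtr0 // => i _; rewrite mxE mul0r. Qed.

Lemma enorm_eq0 (a : vec) : enorm a = 0 -> a = 0.
Proof.
move=> a0; have : vdot a a == 0 by rewrite -sqr_enorm a0 expr0n.
rewrite psumr_eq0 => [/allP a2_eq0|i _]; last by rewrite -expr2 sqr_ge0.
apply/matrixP => i j; rewrite (ord1 j) mxE.
by have := a2_eq0 i (mem_index_enum _); rewrite -expr2 sqrf_eq0 => /eqP.
Qed.

Lemma enormZ (c : R) (a : vec) : enorm (c *: a) = `|c| * enorm a.
Proof.
rewrite /enorm; have -> : vdot (c *: a) (c *: a) = c ^+ 2 * vdot a a.
  by rewrite /vdot mulr_sumr; apply: eq_bigr => i _; rewrite !mxE; ring.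
by rewrite sqrtrM ?sqr_ge0 // sqrtr_sqr.
Qed.

Lemma vdot_row_tr (A : 'M[R]_n) (i : 'I_n) (w : vec) :
  vdot (row i A)^T w = (A *m w) i 0.
Proof. by rewrite /vdot mxE; apply: eq_bigr => j _; rewrite !mxE. Qed.

Lemma pnorm_ge0 (a b : vec) : 0 <= pnorm a b.
Proof. by rewrite le_max enorm_ge0. Qed.

Lemma sqr_pnorm_le (a b : vec) : pnorm a b ^+ 2 <= vdot a a + vdot b b.
Proof.
rewrite -!sqr_enorm /pnorm; case: (leP (enorm a) (enorm b)) => _.
  by rewrite lerDr sqr_ge0.
by rewrite lerDl sqr_ge0.
Qed.

Lemma coord_mulmx_le (M : 'M[R]_n) (w : vec) (i : 'I_n) : enorm w <= 1 ->
  `|(M *m w) i 0| <= \sum_(j < n) `|M i j|.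
Proof.
move=> w_le1; rewrite mxE; apply: le_trans (ler_norm_sum _ _ _) _.
apply: ler_sum => j _; rewrite normrM -[leRHS]mulr1 ler_wpM2l //.
have : `|w j 0| ^+ 2 <= 1.
  have : vdot w w <= 1 by rewrite -sqr_enorm exprn_ile1 // enorm_ge0.
  apply: le_trans; rewrite /vdot (bigD1 j) //= real_normK ?num_real // expr2 lerDl.
  by apply: sumr_ge0 => k _; rewrite -expr2 sqr_ge0.
by rewrite expr_le1.
Qed.

Lemma opnorm_has_ubound (M : 'M[R]_n) :
  has_ubound [set enorm (M *m v) | v in [set v : vec | enorm v <= 1]].
Proof.
exists (Num.sqrt (\sum_(i < n) (\sum_(j < n) `|M i j|) ^+ 2)).
move=> _ [v /= v_le1 <-]; rewrite ler_sqrt; last by apply: sumr_ge0 => i _; rewrite sqr_ge0.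
apply: ler_sum => i _; rewrite -expr2 -real_normK ?num_real //.
by rewrite lerXn2r ?nnegrE ?sumr_ge0 ?coord_mulmx_le.
Qed.

Lemma opnorm_ge0 (M : 'M[R]_n) : 0 <= opnorm M.
Proof.
apply: (ub_le_sup (opnorm_has_ubound M)); exists 0; rewrite /= ?enorm0 //.
by rewrite mulmx0 enorm0.
Qed.

Lemma enorm_mulmx_le (M : 'M[R]_n) (v : vec) : enorm (M *m v) <= opnorm M * enorm v.
Proof.
have [v0|v_neq0] := eqVneq (enorm v) 0.
  by rewrite v0 (enorm_eq0 v0) mulmx0 enorm0 mulr0.
have v_gt0 : 0 < enorm v by rewrite lt_def v_neq0 enorm_ge0.
have inv_ge0 : 0 <= (enorm v)^-1 by rewrite invr_ge0 enorm_ge0.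
have : enorm (M *m ((enorm v)^-1 *: v)) <= opnorm M.
  apply: (ub_le_sup (opnorm_has_ubound M)); exists ((enorm v)^-1 *: v) => //=.
  by rewrite enormZ ger0_norm // mulVf.
by rewrite -scalemxAr enormZ ger0_norm // mulrC ler_pdivrMr.
Qed.

Lemma sqr_frob_row_mx (A B : 'M[R]_n) : frob (row_mx A B) ^+ 2 =
  \sum_(i < n) (vdot (row i A)^T (row i A)^T + vdot (row i B)^T (row i B)^T).
Proof.
rewrite sqr_sqrtr; last by do 2![apply: sumr_ge0 => ? _]; rewrite sqr_ge0.
apply: eq_bigr => i _; rewrite big_split_ord /=.
by congr (_ + _); apply: eq_bigr => j _; rewrite ?row_mxEl ?row_mxEr !mxE expr2.
Qed.

Lemma enorm_le_frob_row_mx (A B : 'M[R]_n) (v : vec) (c : R) : 0 <= c ->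
    (forall i, `|v i 0| <= c * pnorm (row i A)^T (row i B)^T) ->
  enorm v <= c * frob (row_mx A B).
Proof.
move=> c_ge0 v_le; rewrite -(ler_pXn2r (n := 2)) ?nnegrE ?enorm_ge0 ?mulr_ge0 ?sqrtr_ge0 //.
rewrite sqr_enorm exprMn sqr_frob_row_mx mulr_sumr; apply: ler_sum => i _.
rewrite -expr2 -real_normK ?num_real //.
apply: le_trans (_ : (c * pnorm (row i A)^T (row i B)^T) ^+ 2 <= _).
  by rewrite lerXn2r ?nnegrE ?mulr_ge0 ?pnorm_ge0.
by rewrite exprMn ler_wpM2l ?sqr_ge0 ?sqr_pnorm_le.
Qed.

Lemma invmx_residual (A B : 'M[R]_n) (z y : vec) : A \in unitmx ->
  z - invmx A *m B *m y = invmx A *m (A *m z - B *m y).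
Proof. by move=> A_unit; rewrite mulmxBr mulKmx // mulmxA. Qed.

End Norms.

Theorem lemma5p1 (R : realType) (n : nat) (T : R) (hT : 0 < T)
  (F : R -> 'cV[R]_n -> set 'cV[R]_n) (x : R -> 'cV[R]_n) :
  (forall eps : R, 0 < eps -> exists beta : R, 0 < beta /\
     forall t : R, 0 <= t <= T ->
     forall u y : 'cV[R]_n,
       enorm (u - x t) <= beta -> enorm y <= beta -> F t u y ->
     forall ys xs : 'cV[R]_n, coderiv_gph (F t) u y (ys, xs) ->
       `|vdot xs (u - x t) - vdot ys y| <= eps * pnorm xs ys * pnorm (u - x t) y) ->
  forall eps : R, 0 < eps -> exists beta : R, 0 < beta /\
     forall t : R, 0 <= t <= T ->
     forall u y : 'cV[R]_n,
       enorm (u - x t) <= beta -> enorm y <= beta -> F t u y ->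
     forall A B : 'M[R]_n, Areg (F t) u y (A, B) ->
       enorm (u - invmx A *m B *m y - x t)
         <= eps * opnorm (invmx A) * frob (row_mx A B) * pnorm (u - x t) y.
Proof.
move=> coderiv_bound eps eps_gt0; have [beta [beta_gt0 H]] := coderiv_bound eps eps_gt0.
exists beta; split => // t t_in u y u_near y_small F_uy A B [/= A_unit rows_coderiv].
set d := pnorm (u - x t) y.
have row_bound i : `|(A *m (u - x t) - B *m y) i 0| <= eps * d * pnorm (row i A)^T (row i B)^T.
  have := H t t_in u y u_near y_small F_uy _ _ (rows_coderiv i).
  by rewrite !vdot_row_tr !mxE mulrAC.
have v_bound := enorm_le_frob_row_mx (mulr_ge0 (ltW eps_gt0) (pnorm_ge0 _ _)) row_bound.
rewrite addrAC invmx_residual //; apply: le_trans (enorm_mulmx_le _ _) _.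
rewrite [eps * _]mulrC -!mulrA ler_wpM2l ?opnorm_ge0 //.
by rewrite mulrA mulrAC.
Qed.
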